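(* Every representation of the relation algebra $31_{65}$ has at least $15$ vertices.
   Context: A cycle type is the multiset of colors of the sides of a triangle, e.g. $caa$ = one side $c$, two sides $a$. $31_{65}$ is the finite symmetric integral relation algebra with atoms $1',a,b,c$ whose mandatory diversity cycle types are exactly $aaa, bbb, ccc, abb, baa, caa, abc$ (so $acc, bcc, cbb$ are forbidden). A representation on a set $X$ (its vertices) is a coloring of all 2-element subsets of $X$ by $a,b,c$, each color used, such that: for every mandatory type $\{h,i,j\}$, every edge $\{x,y\}$ colored $h$ (for each choice of $h$ among the type's colors) and each ordering $(i,j)$ of the remaining two colors, some $z$ has $\{x,z\}$ colored $i$, $\{z,y\}$ colored $j$; and no triangle of a forbidden type occurs. *)

From Stdlib Require Import List.

Inductive Color : Type := ca | cb | cc.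

(* The multiset {h,i,j} equals the multiset {p,q,r}. *)
Definition is_type (h i j p q r : Color) : Prop :=
  (h = p /\ i = q /\ j = r) \/ (h = p /\ i = r /\ j = q) \/
  (h = q /\ i = p /\ j = r) \/ (h = q /\ i = r /\ j = p) \/
  (h = r /\ i = p /\ j = q) \/ (h = r /\ i = q /\ j = p).

Definition mandatory_type (h i j : Color) : Prop :=
  is_type h i j ca ca ca \/ is_type h i j cb cb cb \/ is_type h i j cc cc cc \/
  is_type h i j ca cb cb \/ is_type h i j cb ca ca \/ is_type h i j cc ca ca \/
  is_type h i j ca cb cc.

Definition forbidden_type (h i j : Color) : Prop :=
  is_type h i j ca cc cc \/ is_type h i j cb cc cc \/ is_type h i j cc cb cb.

(* A representation of 31_65 on vertex set X: col x y is the colour of the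
   2-element subset {x,y} (values on the diagonal are irrelevant). *)
Definition representation_31_65 (X : Type) (col : X -> X -> Color) : Prop :=
  (forall x y : X, x <> y -> col x y = col y x) /\
  (forall k : Color, exists x y : X, x <> y /\ col x y = k) /\
  (forall (x y : X) (i j : Color), x <> y -> mandatory_type (col x y) i j ->
     exists z : X, z <> x /\ z <> y /\ col x z = i /\ col z y = j) /\
  (forall x y z : X, x <> y -> y <> z -> x <> z ->
     ~ forbidden_type (col x y) (col y z) (col x z)).

(** The colour c is an equivalence on vertices: a c-path x–y–z cannot close
    with a or b, since acc and bcc are forbidden.  Every vertex lies in a
    c-class with at least three elements (every colour forces a c-neighbour,
    and ccc forces a second one).  Two b-neighbours of a vertex are never
    c-related (cbb is forbidden), so a vertex together with four b-neighbours
    meets five distinct c-classes, hence at least 15 vertices.  The mandatory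
    types bbb, abb and abc force such a b-star of size four. *)

From Stdlib Require Import List RelationClasses Classical Lia.
Import ListNotations.

Lemma NoDup_union_of_classes {A : Type} (R : A -> A -> Prop) `{Equivalence A R}
    (m : nat) (reps : list A) :
  NoDup reps ->
  (forall r s, In r reps -> In s reps -> r <> s -> ~ R r s) ->
  (forall r, In r reps ->
     exists T, length T = m /\ NoDup T /\ forall u, In u T -> R r u) ->
  exists L, length L = m * length reps /\ NoDup L /\
    forall u, In u L -> exists r, In r reps /\ R r u.
Proof.
  induction reps as [|r rs IH]; intros Hreps Hsep Hclass.
  - exists []. split; [simpl; lia | split; [constructor | intros u []]].
  - apply NoDup_cons_iff in Hreps as [Hr Hrs].
    destruct IH as [L [HL [HLnd HLcls]]]; auto using in_cons.
    destruct (Hclass r (in_eq r rs)) as [T [HT [HTnd HTcls]]].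
    exists (T ++ L). repeat split.
    + rewrite length_app, HT, HL. simpl. lia.
    + apply NoDup_app; auto.
      intros u HuT HuL.
      destruct (HLcls u HuL) as [s [Hs Hsu]].
      apply (Hsep r s); [now left | now right | congruence |].
      now rewrite (HTcls u HuT), Hsu.
    + intros u Hu. apply in_app_or in Hu as [Hu | Hu].
      * exists r. split; [now left | auto].
      * destruct (HLcls u Hu) as [s [Hs Hsu]]. exists s. split; [now right | auto].
Qed.

Ltac solve_disjunction :=
  first [ solve [repeat split] | left; solve_disjunction | right; solve_disjunction ].
Ltac solve_type := unfold mandatory_type, forbidden_type, is_type; solve_disjunction.

Section Representation.

Variable X : Type.
Variable col : X -> X -> Color.
Hypothesis rep : representation_31_65 X col.

Lemma col_sym x y : x <> y -> col x y = col y x.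
Proof. apply rep. Qed.

Lemma mandatory_witness x y i j : x <> y -> mandatory_type (col x y) i j ->
  exists z, z <> x /\ z <> y /\ col x z = i /\ col z y = j.
Proof. apply rep. Qed.

Lemma no_forbidden_triangle x y z : x <> y -> y <> z -> x <> z ->
  ~ forbidden_type (col x y) (col y z) (col x z).
Proof. apply rep. Qed.

Definition cc_related (u v : X) : Prop := u = v \/ (u <> v /\ col u v = cc).

Lemma cc_transitive x y z : x <> y -> y <> z -> x <> z ->
  col x y = cc -> col y z = cc -> col x z = cc.
Proof.
  intros Hxy Hyz Hxz Exy Eyz.
  pose proof (no_forbidden_triangle x y z Hxy Hyz Hxz) as Hno.
  rewrite Exy, Eyz in Hno.
  destruct (col x z); [exfalso; apply Hno; solve_type .. | reflexivity].
Qed.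

Global Instance cc_related_equiv : Equivalence cc_related.
Proof.
  split.
  - now left.
  - intros u v [-> | [Huv E]]; [now left | right].
    split; [congruence | now rewrite col_sym by congruence].
  - intros u v w [-> | [Huv Euv]] [<- | [Hvw Evw]]; try (now left); try (now right).
    destruct (classic (u = w)) as [Huw | Huw]; [now left | right].
    split; [exact Huw | exact (cc_transitive u v w Huv Hvw Huw Euv Evw)].
Qed.

Lemma exists_other_vertex (u : X) : exists v, v <> u.
Proof.
  destruct rep as [_ [Hused _]].
  destruct (Hused ca) as [x [y [Hxy _]]].
  destruct (classic (x = u)) as [-> | Hxu]; eauto.
Qed.

Lemma exists_cc_neighbour u v : u <> v -> exists z, z <> u /\ col u z = cc.
Proof.
  intros Huv.
  destruct (col u v) eqn:E; [| | exists v; split; congruence];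
    destruct (mandatory_witness u v cc ca Huv) as [z [Hzu [_ [Ez _]]]];
    [rewrite E; solve_type | eauto | rewrite E; solve_type | eauto].
Qed.

Lemma cc_class_three (u : X) :
  exists T, length T = 3 /\ NoDup T /\ forall w, In w T -> cc_related u w.
Proof.
  destruct (exists_other_vertex u) as [v Hvu].
  destruct (exists_cc_neighbour u v) as [z [Hzu Ez]]; [congruence |].
  destruct (mandatory_witness u z cc cc) as [w [Hwu [Hwz [Ew _]]]];
    [congruence | rewrite Ez; solve_type |].
  exists [u; z; w]. repeat split.
  - repeat constructor; simpl; intuition congruence.
  - intros t [<- | [<- | [<- | []]]]; [now left | right; split; congruence ..].
Qed.

Definition b_star (o : X) (ps : list X) : Prop :=
  NoDup ps /\ forall p, In p ps -> p <> o /\ col o p = cb.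

Lemma b_star_cons o ps s : b_star o ps -> ~ In s ps -> s <> o -> col o s = cb ->
  b_star o (s :: ps).
Proof.
  intros [Hnd Hps] Hs Hso Es. split.
  - now constructor.
  - intros p [<- | Hp]; auto.
Qed.

Lemma b_star_pair o p q : p <> o -> q <> o -> p <> q ->
  col o p = cb -> col o q = cb -> b_star o [p; q].
Proof.
  intros. split.
  - repeat constructor; simpl; intuition congruence.
  - intros t [<- | [<- | []]]; auto.
Qed.

Lemma b_neighbours_unrelated o p q : p <> o -> q <> o -> p <> q ->
  col o p = cb -> col o q = cb -> ~ cc_related p q.
Proof.
  intros Hpo Hqo Hpq Ep Eq [<- | [_ Epq]]; [congruence |].
  apply (no_forbidden_triangle o p q); auto.
  rewrite Ep, Epq, Eq. solve_type.
Qed.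

Lemma b_star_NoDup o ps : b_star o ps -> NoDup (o :: ps).
Proof.
  intros [Hnd Hps]. constructor; auto.
  intros Ho. now apply (Hps o Ho).
Qed.

Lemma b_star_separates_classes o ps : b_star o ps ->
  forall r s, In r (o :: ps) -> In s (o :: ps) -> r <> s -> ~ cc_related r s.
Proof.
  intros [_ Hps].
  assert (Hcentre : forall p, In p ps -> ~ cc_related o p).
  { intros p Hp [Ho | [_ E]]; destruct (Hps p Hp) as [Hpo Ep]; congruence. }
  intros r s [<- | Hr] [<- | Hs] Hrs; [congruence | auto | |].
  - intros Hsr. apply (Hcentre r Hr). now symmetry.
  - destruct (Hps r Hr), (Hps s Hs). now apply (b_neighbours_unrelated o).
Qed.

Lemma b_star_extend_by_a_edges x p q r : b_star x [p; q; r] ->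
  col q p = ca -> col r p = ca -> exists ps, length ps = 4 /\ b_star x ps.
Proof.
  intros Hstar Eqp Erp.
  destruct (proj2 Hstar p) as [Hpx Ep]; [now left |].
  destruct (mandatory_witness x p cb cb) as [s [Hsx [Hsp [Es Esp]]]];
    [congruence | rewrite Ep; solve_type |].
  exists [s; p; q; r]. split; [reflexivity |].
  apply b_star_cons; auto.
  intros [<- | [<- | [<- | []]]]; congruence.
Qed.

(** abc on yz gives w with wz coloured c, then bbb on yw gives v with vw
    coloured b; v cannot be q or r, as the triangle vwz would be cbb. *)
Lemma b_star_extend_by_a_edge y q r z : b_star y [q; r] -> z <> y ->
  col y z = ca -> col q z = cb -> col r z = cb ->
  exists ps, length ps = 4 /\ b_star y ps.
Proof.
  intros Hstar Hzy Ez Eqz Erz.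
  destruct (mandatory_witness y z cb cc) as [w [Hwy [Hwz [Ew Ewz]]]];
    [congruence | rewrite Ez; solve_type |].
  assert (Hw : ~ In w [q; r]) by (intros [<- | [<- | []]]; congruence).
  assert (Hstar3 : b_star y [w; q; r]) by now apply b_star_cons.
  destruct (mandatory_witness y w cb cb) as [v [Hvy [Hvw [Ev Evw]]]];
    [congruence | rewrite Ew; solve_type |].
  assert (Hv : ~ In v [w; q; r]).
  { intros [<- | Hvqr]; [congruence |].
    assert (Evz : col v z = cb) by (destruct Hvqr as [<- | [<- | []]]; assumption).
    apply (no_forbidden_triangle v w z); try congruence.
    rewrite Evw, Ewz, Evz. solve_type. }
  exists [v; w; q; r]. split; [reflexivity | now apply b_star_cons].
Qed.

Lemma exists_b_star4 : exists o ps, length ps = 4 /\ b_star o ps.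
Proof.
  destruct rep as [_ [Hused _]].
  destruct (Hused cb) as [x [y1 [Hxy1 E1]]].
  destruct (mandatory_witness x y1 cb cb) as [y2 [H2x [H2y1 [E2 E21]]]];
    [congruence | rewrite E1; solve_type |].
  destruct (mandatory_witness x y1 cb ca) as [y3 [H3x [H3y1 [E3 E31]]]];
    [congruence | rewrite E1; solve_type |].
  assert (H23 : y2 <> y3) by congruence.
  destruct (col y2 y3) eqn:E23.
  - exists x. apply (b_star_extend_by_a_edges x y3 y1 y2).
    + apply b_star_cons; [apply b_star_pair | ..]; auto; simpl; intuition congruence.
    + now rewrite col_sym.
    + exact E23.
  - exists y1. apply (b_star_extend_by_a_edge y1 x y2 y3); auto.
    + apply b_star_pair; auto; rewrite col_sym; auto.
    + now rewrite col_sym.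
  - exfalso. apply (b_neighbours_unrelated x y2 y3); auto.
    now right.
Qed.

End Representation.

Theorem mainTheorem10 (X : Type) (col : X -> X -> Color) :
  representation_31_65 X col ->
  exists l : list X, length l = 15 /\ NoDup l.
Proof.
  intros rep.
  destruct (exists_b_star4 X col rep) as [o [ps [Hlen Hstar]]].
  pose proof (cc_related_equiv X col rep).
  destruct (NoDup_union_of_classes (cc_related X col) 3 (o :: ps))
    as [L [HL [Hnd _]]].
  - exact (b_star_NoDup X col o ps Hstar).
  - exact (b_star_separates_classes X col rep o ps Hstar).
  - intros r _. exact (cc_class_three X col rep r).
  - exists L. split; [rewrite HL; simpl; now rewrite Hlen | exact Hnd].
Qed.
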